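(* Let $\langle\cdot,\cdot\rangle$ be an inner product on $\mathrm{span}(\mathcal{H})$ and let $d(A,B)=\langle h_A-h_B,h_A-h_B\rangle^{1/2}$ for $A,B\in\mathcal{K}_n$. Let $A_1,\dots,A_N\in\mathcal{K}_n$ with $N\geq 1$. Then the convex body $X\in\mathcal{K}_n$ minimizing $\sum_{i=1}^N d(A_i,X)^2$ is $X=\frac{1}{N}\sum_{i=1}^N A_i$ (Minkowski sum).
   Context: A convex body is a closed, bounded, non-empty convex subset of $\mathbb{R}^n$; $\mathcal{K}_n$ is the set of convex bodies in $\mathbb{R}^n$ with Minkowski addition and nonnegative scaling. The support function of $A$ is $h_A(x)=\sup\{a\cdot x: a\in A\}$; $\mathcal{H}=\{h_A : A\in\mathcal{K}_n\}$ and $\mathrm{span}(\mathcal{H})$ is its linear span among real functions on $\mathbb{R}^n$. *)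

From HB Require Import structures.
From mathcomp Require Import all_boot all_order all_algebra.
From mathcomp Require Import all_classical all_reals all_analysis.
Set Implicit Arguments. Unset Strict Implicit. Unset Printing Implicit Defensive.
Import Order.TTheory GRing.Theory Num.Theory.
Import numFieldNormedType.Exports.
Local Open Scope classical_set_scope.
Local Open Scope ring_scope.

Section ConvexBodies.
Variables (R : realType) (n : nat).
Local Notation V := 'rV[R]_n.

Definition dotv (a x : V) : R := \sum_(i < n) a ord0 i * x ord0 i.

Definition convex_setv (A : set V) : Prop :=
  forall x y (t : R), A x -> A y -> 0 <= t -> t <= 1 -> A (t *: x + (1 - t) *: y).

Definition convex_body (A : set V) : Prop :=
  [/\ closed A, bounded_set A, A !=set0 & convex_setv A].

Definition support (A : set V) : V -> R :=
  fun x => sup [set dotv a x | a in A].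

Definition mink_sum (A B : set V) : set V := [set a + b | a in A & b in B].
Definition mink_scale (c : R) (A : set V) : set V := [set c *: a | a in A].

Definition spanH (f : V -> R) : Prop :=
  exists (k : nat) (c : 'I_k -> R) (B : 'I_k -> set V),
    (forall j, convex_body (B j)) /\
    f = (fun x => \sum_(j < k) c j * support (B j) x).

(* an inner product on span(H) (values of ip outside span(H) are irrelevant) *)
Definition inner_product_on_spanH (ip : (V -> R) -> (V -> R) -> R) : Prop :=
  [/\ forall f g, spanH f -> spanH g -> ip f g = ip g f,
      forall (a : R) f g k, spanH f -> spanH g -> spanH k ->
        ip (fun x => a * f x + g x) k = a * ip f k + ip g k
    & forall f, spanH f -> f <> (fun _ => 0) -> 0 < ip f f].

Definition dist_ip (ip : (V -> R) -> (V -> R) -> R) (A B : set V) : R :=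
  Num.sqrt (ip (fun x => support A x - support B x) (fun x => support A x - support B x)).

End ConvexBodies.

From Pilot Require Import Defs.
From HB Require Import structures.
From mathcomp Require Import all_boot all_order all_algebra.
From mathcomp Require Import all_classical all_reals all_analysis.
From mathcomp Require Import ring lra.
Set Implicit Arguments. Unset Strict Implicit. Unset Printing Implicit Defensive.
Import Order.TTheory GRing.Theory Num.Theory.
Import numFieldNormedType.Exports.
Local Open Scope classical_set_scope.
Local Open Scope ring_scope.

(* The support function is additive under Minkowski sums and positively
   homogeneous, so h_M is the mean of the h_{A_i}.  In the inner product space
   span(H) the deviations h_{A_i} - h_M sum to zero, hence
   sum_i d(A_i, X)^2 = sum_i d(A_i, M)^2 + N <h_M - h_X, h_M - h_X>,
   so M minimizes, and any other minimizer X has h_X = h_M.  A convex body is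
   determined by its support function: a point x of X outside M is separated
   from M by the hyperplane orthogonal to x - p, p the point of M nearest to x,
   giving h_X(x - p) > h_M(x - p). *)

Section DotProduct.
Variables (R : realType) (n : nat).
Implicit Types (a b x : 'rV[R]_n).

Lemma dotvC a x : dotv a x = dotv x a.
Proof. by apply: eq_bigr => i _; rewrite mulrC. Qed.

Lemma dotvDl a b x : dotv (a + b) x = dotv a x + dotv b x.
Proof. by rewrite /dotv -big_split; apply: eq_bigr => i _; rewrite mxE mulrDl. Qed.

Lemma dotvZl c a x : dotv (c *: a) x = c * dotv a x.
Proof. by rewrite /dotv mulr_sumr; apply: eq_bigr => i _; rewrite mxE mulrA. Qed.

Lemma dotv0l x : dotv 0 x = 0.
Proof. by rewrite -(scale0r 0) dotvZl mul0r. Qed.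

Lemma dotvBl a b x : dotv (a - b) x = dotv a x - dotv b x.
Proof. by rewrite dotvDl -scaleN1r dotvZl mulN1r. Qed.

Lemma dotv_ge0 a : 0 <= dotv a a.
Proof. by rewrite sumr_ge0 // => i _; rewrite -expr2 sqr_ge0. Qed.

Lemma dotv_gt0 a : a != 0 -> 0 < dotv a a.
Proof.
move=> a0; rewrite lt_def dotv_ge0 andbT; apply: contra a0.
rewrite psumr_eq0 => [/allP a_eq0|i _]; last by rewrite -expr2 sqr_ge0.
apply/eqP/rowP => i; rewrite mxE.
by have /= := a_eq0 i (mem_index_enum i); rewrite mulf_eq0 orbb => /eqP.
Qed.

Lemma dotv_sqr_subZ a b t :
  dotv (a - t *: b) (a - t *: b) = dotv a a - 2 * t * dotv a b + t ^+ 2 * dotv b b.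
Proof.
rewrite !dotvBl !dotvZl [dotv a _]dotvC [dotv b _]dotvC !dotvBl !dotvZl [dotv b a]dotvC.
by rewrite expr2; ring.
Qed.

Lemma continuous_dotv (T : topologicalType) (f g : T -> 'rV[R]_n) :
  continuous f -> continuous g -> continuous (fun t => dotv (f t) (g t)).
Proof.
move=> cf cg; apply: continuous_big => [z|i _ t].
  by apply: cvgD; [exact: cvg_fst | exact: cvg_snd].
by apply: continuousM; [exact: continuous_comp (cf t) (@coord_continuous R 1 n ord0 i _)
                      | exact: continuous_comp (cg t) (@coord_continuous R 1 n ord0 i _)].
Qed.

End DotProduct.

Lemma sup_scaleE (R : realType) (c : R) (S : set R) :
  0 < c -> has_sup S -> sup [set c * y | y in S] = c * sup S.
Proof.
move=> c0 [[y0 Sy0] [m ubm]].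
have cS0 : [set c * y | y in S] !=set0 by exists (c * y0), y0.
have ubcS : ubound [set c * y | y in S] (c * sup S).
  by move=> _ [y Sy <-]; rewrite ler_pM2l //; apply: ub_le_sup => //; exists m.
apply/le_anti; rewrite ge_sup //= -ler_pdivlMl //.
apply: ge_sup; first by exists y0.
move=> y Sy; rewrite ler_pdivlMl //; apply: ub_le_sup; last by exists y.
by exists (c * sup S).
Qed.

Section ConvexBodies.
Variables (R : realType) (n : nat).
Local Notation V := 'rV[R]_n.
Implicit Types (A B X Y : set V) (x : V).

Lemma convex_bodyP A : convex_body A <-> [/\ compact A, A !=set0 & convex_setv A].
Proof.
split=> [[clA bdA A0 cvA]|[cA A0 cvA]]; first by split => //; exact: bounded_closed_compact.
by split => //; [exact: compact_closed (@norm_hausdorff _ _) cA | exact: compact_bounded].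
Qed.

Lemma compact_mink_sum A B : compact A -> compact B -> compact (mink_sum A B).
Proof.
move=> cA cB; have -> : mink_sum A B = (fun z : V * V => z.1 + z.2) @` (A `*` B).
  apply/seteqP; split => z.
  - by case=> a Aa [b Bb <-]; exists (a, b).
  - by case=> -[a b] [/= Aa Bb] <-; exists a => //; exists b.
apply: continuous_compact; last exact: compact_setX.
by apply: continuous_subspaceT => z; apply: cvgD; [exact: cvg_fst | exact: cvg_snd].
Qed.

Lemma compact_mink_scale c A : compact A -> compact (mink_scale c A).
Proof.
move=> cA; apply: continuous_compact => //; apply: continuous_subspaceT => z.
by apply: continuousZl_tmp; exact: cvg_id.
Qed.

Lemma convex_mink_sum A B : convex_setv A -> convex_setv B -> convex_setv (mink_sum A B).
Proof.
move=> cvA cvB _ _ t [a Aa [b Bb <-]] [a' Aa' [b' Bb' <-]] t0 t1.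
exists (t *: a + (1 - t) *: a'); first exact: cvA.
by exists (t *: b + (1 - t) *: b'); [exact: cvB | rewrite !scalerDr addrACA].
Qed.

Lemma convex_mink_scale c A : convex_setv A -> convex_setv (mink_scale c A).
Proof.
move=> cvA _ _ t [a Aa <-] [a' Aa' <-] t0 t1.
exists (t *: a + (1 - t) *: a'); first exact: cvA.
by rewrite scalerDr !scalerA mulrC [(1 - t) * c]mulrC.
Qed.

Lemma convex_body0 : convex_body [set 0 : V].
Proof.
apply/convex_bodyP; split; [exact: compact_set1 | by exists 0 |].
by move=> x y t /= -> -> _ _; rewrite !scaler0 addr0.
Qed.

Lemma convex_body_mink_sum A B :
  convex_body A -> convex_body B -> convex_body (mink_sum A B).
Proof.
move=> /convex_bodyP[cA [a Aa] cvA] /convex_bodyP[cB [b Bb] cvB]; apply/convex_bodyP.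
split; [exact: compact_mink_sum | by exists (a + b), a => //; exists b |].
exact: convex_mink_sum.
Qed.

Lemma convex_body_mink_scale c A : convex_body A -> convex_body (mink_scale c A).
Proof.
move=> /convex_bodyP[cA [a Aa] cvA]; apply/convex_bodyP.
split; [exact: compact_mink_scale | by exists (c *: a), a | exact: convex_mink_scale].
Qed.

Lemma convex_body_big_mink_sum (I : Type) (r : seq I) (P : pred I) (F : I -> set V) :
  (forall i, P i -> convex_body (F i)) ->
  convex_body (\big[@mink_sum R n/[set 0]]_(i <- r | P i) F i).
Proof.
move=> cbF; apply: big_ind => //; [exact: convex_body0 | exact: convex_body_mink_sum].
Qed.

Lemma has_sup_support_set A x : compact A -> A !=set0 -> has_sup [set dotv a x | a in A].
Proof.
move=> cA [a Aa]; apply: compact_has_sup; first by exists (dotv a x), a.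
apply: continuous_compact => //; apply: continuous_subspaceT.
by apply: continuous_dotv => [z|]; [exact: cvg_id | exact: cst_continuous].
Qed.

Lemma dotv_le_support A x a : compact A -> A a -> dotv a x <= Defs.support A x.
Proof.
move=> cA Aa; apply: ub_le_sup; last by exists a.
by case: (has_sup_support_set x cA (ex_intro _ a Aa)).
Qed.

Lemma support_set0 x : Defs.support [set 0 : V] x = 0.
Proof.
rewrite /Defs.support (_ : [set dotv a x | a in [set 0]] = [set 0]) ?sup1 //.
by apply/seteqP; split => [_ [a /= -> <-]|_ /= ->]; [|exists 0]; rewrite /= ?dotv0l.
Qed.

Lemma support_mink_sum A B x : compact A -> A !=set0 -> compact B -> B !=set0 ->
  Defs.support (mink_sum A B) x = Defs.support A x + Defs.support B x.
Proof.
move=> cA A0 cB B0; rewrite /Defs.support -sup_sumE; try exact: has_sup_support_set.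
congr sup; apply/seteqP; split => z.
- case=> _ [a Aa [b Bb <-]] <-; exists (dotv a x); first by exists a.
  by exists (dotv b x); [exists b | rewrite dotvDl].
- case=> _ [a Aa <-] [_ [b Bb <-] <-].
  by exists (a + b); [exists a => //; exists b | rewrite dotvDl].
Qed.

Lemma support_mink_scale c A x : 0 < c -> compact A -> A !=set0 ->
  Defs.support (mink_scale c A) x = c * Defs.support A x.
Proof.
move=> c0 cA A0; rewrite /Defs.support -sup_scaleE //; last exact: has_sup_support_set.
congr sup; apply/seteqP; split => z [_ [a Aa <-] <-].
- by exists (dotv a x); [exists a | rewrite dotvZl].
- by exists (c *: a); [exists a | rewrite dotvZl].
Qed.

Lemma support_big_mink_sum (I : Type) (r : seq I) (P : pred I) (F : I -> set V) x :
  (forall i, P i -> convex_body (F i)) ->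
  Defs.support (\big[@mink_sum R n/[set 0]]_(i <- r | P i) F i) x
  = \sum_(i <- r | P i) Defs.support (F i) x.
Proof.
move=> cbF; elim: r => [|i r IH]; first by rewrite !big_nil support_set0.
rewrite !big_cons; case: ifP => // Pi.
have /convex_bodyP[cFi Fi0 _] := cbF i Pi.
have /convex_bodyP[cS S0 _] := convex_body_big_mink_sum r cbF.
by rewrite support_mink_sum // IH.
Qed.

Lemma nearest_point_obtuse Y x p y : convex_setv Y -> Y p -> Y y ->
  (forall q, Y q -> dotv (x - p) (x - p) <= dotv (x - q) (x - q)) ->
  dotv (y - p) (x - p) <= 0.
Proof.
move=> cvY Yp Yy pmin.
set d := dotv (y - p) (x - p); set D := dotv (y - p) (y - p).
have descent t : 0 <= t -> t <= 1 -> 2 * t * d <= t ^+ 2 * D.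
  move=> t0 t1; have := pmin _ (cvY y p t Yy Yp t0 t1).
  have -> : x - (t *: y + (1 - t) *: p) = (x - p) - t *: (y - p).
    by rewrite scalerBl scale1r scalerBr addrCA opprD addrA.
  by rewrite dotv_sqr_subZ [dotv (x - p) (y - p)]dotvC -/d -/D; lra.
rewrite leNgt; apply/negP => d0.
have D0 : 0 <= D := dotv_ge0 _.
(* unlike the optimal step [d / D], the step [d / (D + d)] always lies in (0, 1] *)
pose t := d / (D + d).
have tDd : t * (D + d) = d by rewrite /t divfK // gt_eqF // ltr_wpDl.
have t0 : 0 < t by rewrite divr_gt0 // ltr_wpDl.
have t1 : t <= 1 by rewrite ler_pdivrMr ?mul1r ?lerDr // ltr_wpDl.
have := descent t (ltW t0) t1; nra.
Qed.

Lemma support_le_subset X Y : compact X -> compact Y -> Y !=set0 -> convex_setv Y ->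
  (forall u, Defs.support X u <= Defs.support Y u) -> X `<=` Y.
Proof.
move=> cX cY Y0 cvY le_hXY x Xx; apply: contrapT => Y'x.
have dist_cont : {within Y, continuous (fun q => dotv (x - q) (x - q))}.
  apply: continuous_subspaceT; apply: continuous_dotv => q;
  by apply: (@continuousB _ _ _ (fun=> x) id); [exact: cst_continuous | exact: cvg_id].
have [p /set_mem Yp pmin] := compact_EVT_min Y0 cY dist_cont.
have p_nearest q : Y q -> dotv (x - p) (x - p) <= dotv (x - q) (x - q).
  by move=> Yq; apply: pmin; exact: mem_set.
have hYxp : Defs.support Y (x - p) <= dotv p (x - p).
  apply: ge_sup => [|_ [y Yy <-]]; first by exists (dotv p (x - p)), p.
  by rewrite -subr_le0 -dotvBl; exact: nearest_point_obtuse p_nearest.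
have xp0 : x - p != 0 by rewrite subr_eq0; apply: contraPneq Y'x => ->.
have := le_trans (dotv_le_support (x - p) cX Xx) (le_trans (le_hXY _) hYxp).
by rewrite -subr_le0 -dotvBl leNgt dotv_gt0.
Qed.

Lemma support_inj X Y : convex_body X -> convex_body Y ->
  Defs.support X =1 Defs.support Y -> X = Y.
Proof.
move=> /convex_bodyP[cX X0 cvX] /convex_bodyP[cY Y0 cvY] hXY.
by apply/seteqP; split; apply: support_le_subset => // u; rewrite hXY.
Qed.

End ConvexBodies.

Section SpanH.
Variables (R : realType) (n : nat).
Local Notation V := 'rV[R]_n.
Implicit Types (f g h : V -> R).

Lemma spanH0 : spanH (fun _ : V => 0 : R).
Proof.
exists 0%N, (fun=> 0), (fun=> set0); split; first by case.
by apply: funext => x; rewrite big_ord0.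
Qed.

Lemma spanH_support (B : set V) : convex_body B -> spanH (Defs.support B).
Proof.
move=> cbB; exists 1%N, (fun=> 1), (fun=> B); split => //.
by apply: funext => x; rewrite big_ord1 mul1r.
Qed.

Lemma spanH_lin (a : R) f g : spanH f -> spanH g -> spanH (fun x => a * f x + g x).
Proof.
move=> [k1 [c1 [B1 [cbB1 ->]]]] [k2 [c2 [B2 [cbB2 ->]]]].
pose c (j : 'I_(k1 + k2)) := match fintype.split j with inl j1 => a * c1 j1 | inr j2 => c2 j2 end.
pose B (j : 'I_(k1 + k2)) := match fintype.split j with inl j1 => B1 j1 | inr j2 => B2 j2 end.
exists (k1 + k2)%N, c, B; split; first by move=> j; rewrite /B; case: fintype.split.
apply: funext => x; rewrite big_split_ord /= mulr_sumr.
have splitl j : fintype.split (lshift k2 j) = inl j := unsplitK (inl j).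
have splitr j : fintype.split (rshift k1 j) = inr j := unsplitK (inr j).
by congr (_ + _); apply: eq_bigr => j _; rewrite /c /B ?splitl ?splitr ?mulrA.
Qed.

Lemma spanHD f g : spanH f -> spanH g -> spanH (fun x => f x + g x).
Proof.
move=> sf sg; have -> : (fun x => f x + g x) = fun x => 1 * f x + g x.
  by apply: funext => x; rewrite mul1r.
exact: spanH_lin.
Qed.

Lemma spanHB f g : spanH f -> spanH g -> spanH (fun x => f x - g x).
Proof.
move=> sf sg; have -> : (fun x => f x - g x) = fun x => -1 * g x + f x.
  by apply: funext => x; rewrite mulN1r addrC.
exact: spanH_lin.
Qed.

Lemma spanH_sum (I : Type) (r : seq I) (F : I -> V -> R) :
  (forall i, spanH (F i)) -> spanH (fun x => \sum_(i <- r) F i x).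
Proof.
move=> sF; elim: r => [|i r IH].
  have -> : (fun x => \sum_(i <- [::]) F i x) = fun=> 0.
    by apply: funext => x; rewrite big_nil.
  exact: spanH0.
have -> : (fun x => \sum_(j <- i :: r) F j x) = fun x => F i x + \sum_(j <- r) F j x.
  by apply: funext => x; rewrite big_cons.
exact: spanHD.
Qed.

Variable ip : (V -> R) -> (V -> R) -> R.
Hypothesis hip : inner_product_on_spanH ip.

Lemma ipC f g : spanH f -> spanH g -> ip f g = ip g f.
Proof. by case: hip => ipC _ _; exact: ipC. Qed.

Lemma ip0l h : spanH h -> ip (fun=> 0) h = 0.
Proof.
case: hip => _ ip_lin _ sh; have := ip_lin 1 _ _ h spanH0 spanH0 sh.
rewrite (_ : (fun x => _) = fun=> 0); last by apply: funext => x; rewrite mulr0 addr0.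
by rewrite mul1r; lra.
Qed.

Lemma ipDl f g h : spanH f -> spanH g -> spanH h ->
  ip (fun x => f x + g x) h = ip f h + ip g h.
Proof.
case: hip => _ ip_lin _ sf sg sh; rewrite -[ip f h]mul1r -ip_lin //.
by congr ip; apply: funext => x; rewrite mul1r.
Qed.

Lemma ip_suml (I : Type) (r : seq I) (F : I -> V -> R) h :
  (forall i, spanH (F i)) -> spanH h ->
  ip (fun x => \sum_(i <- r) F i x) h = \sum_(i <- r) ip (F i) h.
Proof.
move=> sF sh; elim: r => [|i r IH].
  have -> : (fun x => \sum_(i <- [::]) F i x) = fun=> 0.
    by apply: funext => x; rewrite big_nil.
  by rewrite big_nil ip0l.
rewrite big_cons -IH -(ipDl (sF i) (spanH_sum r sF) sh).
by congr ip; apply: funext => x; rewrite big_cons.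
Qed.

Lemma ip_sqrD f g : spanH f -> spanH g ->
  ip (fun x => f x + g x) (fun x => f x + g x) = ip f f + 2 * ip f g + ip g g.
Proof.
move=> sf sg; have sfg := spanHD sf sg.
rewrite ipDl // (ipC sf sfg) (ipC sg sfg) !ipDl // (ipC sg sf); ring.
Qed.

Lemma ip_ge0 f : spanH f -> 0 <= ip f f.
Proof.
case: hip => _ _ ip_gt0 sf; have [->|f0] := pselect (f = fun=> 0).
  by rewrite (ip0l spanH0).
exact/ltW/ip_gt0.
Qed.

Lemma ip_le0_eq0 f : spanH f -> ip f f <= 0 -> f = fun=> 0.
Proof.
case: hip => _ _ ip_gt0 sf ipf_le0; apply: contrapT => /(ip_gt0 _ sf).
by rewrite ltNge ipf_le0.
Qed.

Lemma ip_sum_sqr_sub_mean (N : nat) (F : 'I_N -> V -> R) g h :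
  (forall i, spanH (F i)) -> spanH g -> spanH h ->
  (forall x, N%:R * g x = \sum_(i < N) F i x) ->
  \sum_(i < N) ip (fun x => F i x - h x) (fun x => F i x - h x)
  = \sum_(i < N) ip (fun x => F i x - g x) (fun x => F i x - g x)
    + N%:R * ip (fun x => g x - h x) (fun x => g x - h x).
Proof.
move=> sF sg sh g_mean.
pose u i x := F i x - g x; have su i : spanH (u i) := spanHB (sF i) sg.
have sw : spanH (fun x => g x - h x) := spanHB sg sh.
have split_u i : (fun x => F i x - h x) = fun x => u i x + (g x - h x).
  by apply: funext => x; rewrite /u addrA subrK.
have sum_u0 : \sum_(i < N) ip (u i) (fun x => g x - h x) = 0.
  rewrite -ip_suml //; have -> : (fun x => \sum_(i < N) u i x) = fun=> 0.
    by apply: funext => x; rewrite sumrB sumr_const card_ord -mulr_natl g_mean subrr.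
  exact: ip0l.
under eq_bigr => i _ do rewrite split_u ip_sqrD //.
by rewrite !big_split /= -mulr_sumr sum_u0 mulr0 addr0 sumr_const card_ord mulr_natl.
Qed.

Lemma sqr_dist_ip (A B : set V) : convex_body A -> convex_body B ->
  dist_ip ip A B ^+ 2 = ip (fun x => Defs.support A x - Defs.support B x)
                           (fun x => Defs.support A x - Defs.support B x).
Proof.
move=> cbA cbB; rewrite sqr_sqrtr //.
by apply/ip_ge0/spanHB; exact: spanH_support.
Qed.

End SpanH.

Theorem proposition8 (R : realType) (n N : nat)
    (ip : ('rV[R]_n -> R) -> ('rV[R]_n -> R) -> R)
    (hip : inner_product_on_spanH ip)
    (A : 'I_N -> set 'rV[R]_n) (hA : forall i, convex_body (A i))
    (hN : (1 <= N)%N) :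
  let M := mink_scale ((N%:R : R)^-1) (\big[@mink_sum R n/[set 0]]_(i < N) A i) in
  [/\ convex_body M,
      forall X, convex_body X ->
        \sum_(i < N) dist_ip ip (A i) M ^+ 2 <= \sum_(i < N) dist_ip ip (A i) X ^+ 2
    & forall X, convex_body X ->
        \sum_(i < N) dist_ip ip (A i) X ^+ 2 <= \sum_(i < N) dist_ip ip (A i) M ^+ 2 ->
        X = M].
Proof.
move=> M; have N_gt0 : 0 < (N%:R : R) by rewrite ltr0n.
have cbS : convex_body (\big[@mink_sum R n/[set 0]]_(i < N) A i).
  exact: convex_body_big_mink_sum.
have cbM : convex_body M := convex_body_mink_scale _ cbS.
have M_mean x : N%:R * Defs.support M x = \sum_(i < N) Defs.support (A i) x.
  have /convex_bodyP[cS S0 _] := cbS.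
  by rewrite support_mink_scale ?invr_gt0 // mulVKf ?gt_eqF // support_big_mink_sum.
have excess X : convex_body X ->
    \sum_(i < N) dist_ip ip (A i) X ^+ 2 = \sum_(i < N) dist_ip ip (A i) M ^+ 2
    + N%:R * ip (fun x => Defs.support M x - Defs.support X x)
                (fun x => Defs.support M x - Defs.support X x).
  move=> cbX; under eq_bigr => i _ do rewrite sqr_dist_ip //.
  under [in RHS]eq_bigr => i _ do rewrite sqr_dist_ip //.
  by apply: ip_sum_sqr_sub_mean => // [i||]; exact: spanH_support.
have sMX X : convex_body X -> spanH (fun x => Defs.support M x - Defs.support X x).
  by move=> cbX; apply: spanHB; exact: spanH_support.
split => // X cbX; rewrite (excess X cbX).
  by rewrite lerDl mulr_ge0 ?ler0n // (ip_ge0 hip (sMX X cbX)).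
rewrite -[leRHS]addr0 lerD2l pmulr_rle0 // => /(ip_le0_eq0 hip (sMX X cbX)) hMX.
apply/esym/support_inj => // x; apply/eqP; rewrite -subr_eq0.
by have /= -> := congr1 (@^~ x) hMX.
Qed.
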